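(* Let $(X,\to,d_A)$ be a metric transition system over $A$, let $\mathcal G\subseteq[0,1]^X$ and $d_0=\alpha_S(\mathcal G)$, and assume that for every $\varepsilon>0$ and $x\in X$ there is $g\in\mathcal G$ with $g(x)=1$ and $g(x)\ominus g(x')\ge d_0(x,x')-\varepsilon$ for all $x'\in X$. Then \[\alpha_T\big(\mu(\mathit{lo}_T\cup\mathcal G)\big)=(d_{\mathrm{Tr}}\otimes d_0)_{\overrightarrow H}\circ(\hat\delta\times\hat\delta),\] i.e. for $X_1,X_2\subseteq X$ the left side at $(X_1,X_2)$ equals $\bigvee_{(\sigma_1,x_1')\in\hat\delta[X_1]}\bigwedge_{(\sigma_2,x_2')\in\hat\delta[X_2]}\max\{d_{\mathrm{Tr}}(\sigma_1,\sigma_2),d_0(x_1',x_2')\}$. Here $\mu(\mathit{lo}_T\cup\mathcal G)$ is the least fixpoint in $(\mathcal P([0,1]^X),\subseteq)$ of $\mathcal F\mapsto\mathit{lo}_T(\mathcal F)\cup\mathcal G$. The same holds if $\mathit{lo}_T$ is replaced by $\mathit{lo}'(\mathcal F)=\bigcup_{a\in A}\{\bigcirc_af\mid f\in\mathcal F\}\cup\{1\}$.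
   Context: A metric transition system over $A$ is $(X,\to,d_A)$ with $\to\subseteq X\times A\times X$ and a metric $d_A\colon A\times A\to[0,1]$. $r\oplus s=\min\{r+s,1\}$, $r\ominus s=\max\{0,r-s\}$; $\bigvee\emptyset=0$, $\bigwedge\emptyset=1$. $\alpha_S(\mathcal G)(x_1,x_2)=\bigvee_{f\in\mathcal G}(f(x_1)\ominus f(x_2))$. $\hat\delta[Y]=\{(\sigma,x')\mid\sigma\in A^*,\exists x\in Y\colon x\xrightarrow{\sigma}x'\}$ (paths, including the empty word). $d_{\mathrm{Tr}}(\sigma_1,\sigma_2)=1$ if $|\sigma_1|\neq|\sigma_2|$, $d_{\mathrm{Tr}}(\varepsilon,\varepsilon)=0$, $d_{\mathrm{Tr}}(a_1\sigma_1',a_2\sigma_2')=\max\{d_A(a_1,a_2),d_{\mathrm{Tr}}(\sigma_1',\sigma_2')\}$. $(d\otimes d')((u,v),(u',v'))=\max\{d(u,u'),d'(v,v')\}$, and $d_{\overrightarrow H}(U,V)=\bigvee_{u\in U}\bigwedge_{v\in V}d(u,v)$. $\bigcirc_af(x)=\bigvee\{(1-d_A(b,a))\land f(x')\mid x\xrightarrow{b}x'\}$. For $f\colon X\to[0,1]$, $\tilde f(Y)=\bigvee_{x\in Y}f(x)$; $\alpha_T(\mathcal F)(X_1,X_2)=\bigvee_{f\in\mathcal F}(\tilde f(X_1)\ominus\tilde f(X_2))$. $\mathit{lo}_T(\mathcal F)=\bigcup_{a\in A}\{\bigcirc_af\mid f\in\mathrm{cl}^{\mathrm{sh}}(\mathcal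 F)\}\cup\{1\}$ where $\mathrm{cl}^{\mathrm{sh}}$ closes under constant shifts $f\mapsto f\ominus c$, $f\mapsto f\oplus c$, $c\in[0,1]$, and $1$ is the constant-1 function. *)

From HB Require Import structures.
From mathcomp Require Import all_boot all_order all_algebra.
From mathcomp Require Import boolp classical_sets reals.
Set Implicit Arguments. Unset Strict Implicit. Unset Printing Implicit Defensive.
Import Order.TTheory GRing.Theory Num.Theory.
Local Open Scope classical_set_scope.
Local Open Scope ring_scope.

Section Defs.
Variable R : realType.

Definition oplus (r s : R) : R := Num.min (r + s) 1.
Definition ominus (r s : R) : R := Num.max 0 (r - s).

Definition bigvee (S : set R) : R := if pselect (S = set0) then 0 else sup S.
Definition bigwedge (S : set R) : R := if pselect (S = set0) then 1 else inf S.

Definition unit_valued {X : Type} (f : X -> R) : Prop := forall x, 0 <= f x <= 1.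

Definition unit_metric {A : Type} (d : A -> A -> R) : Prop :=
  [/\ forall a b, 0 <= d a b <= 1,
      forall a b, d a b = 0 <-> a = b,
      forall a b, d a b = d b a &
      forall a b c, d a c <= d a b + d b c].

Variables (X A : Type) (trans : X -> A -> X -> Prop) (dA : A -> A -> R).

Definition alphaS (G : set (X -> R)) (x1 x2 : X) : R :=
  bigvee [set ominus (g x1) (g x2) | g in G].

Inductive path : X -> seq A -> X -> Prop :=
| path_nil x : path x [::] x
| path_cons x a y s z : trans x a y -> path y s z -> path x (a :: s) z.

Definition delta_hat (Y : set X) : set (seq A * X) :=
  [set p | exists2 x, Y x & path x p.1 p.2].

Fixpoint dTr_rec (s1 s2 : seq A) : R :=
  match s1, s2 with
  | [::], [::] => 0
  | a1 :: s1', a2 :: s2' => Num.max (dA a1 a2) (dTr_rec s1' s2')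
  | _, _ => 1
  end.

Definition dTr (s1 s2 : seq A) : R :=
  if size s1 != size s2 then 1 else dTr_rec s1 s2.

Definition dprod {U V : Type} (d : U -> U -> R) (d' : V -> V -> R)
  (p q : U * V) : R := Num.max (d p.1 q.1) (d' p.2 q.2).

Definition hausdorff {U : Type} (d : U -> U -> R) (S T : set U) : R :=
  bigvee [set bigwedge [set d u v | v in T] | u in S].

Definition next_op (a : A) (f : X -> R) (x : X) : R :=
  bigvee [set r | exists b x', trans x b x' /\ r = Num.min (1 - dA b a) (f x')].

Definition cl_sh (F : set (X -> R)) : set (X -> R) :=
  [set h | exists f c, [/\ F f, 0 <= c <= 1 &
             (h = (fun x => ominus (f x) c) \/ h = (fun x => oplus (f x) c))]].

Definition const1 : X -> R := fun _ => 1.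

Definition loT (F : set (X -> R)) : set (X -> R) :=
  [set h | exists a f, cl_sh F f /\ h = next_op a f] `|` [set const1].

Definition lo' (F : set (X -> R)) : set (X -> R) :=
  [set h | exists a f, F f /\ h = next_op a f] `|` [set const1].

Definition lift_fun (f : X -> R) (Y : set X) : R := bigvee (f @` Y).

Definition alphaT (F : set (X -> R)) (X1 X2 : set X) : R :=
  bigvee [set ominus (lift_fun f X1) (lift_fun f X2) | f in F].

(* least fixpoint in (P([0,1]^X), subseteq) of a monotone operator Phi,
   as the intersection of all its pre-fixpoints (Knaster-Tarski) *)
Definition lfp (Phi : set (X -> R) -> set (X -> R)) : set (X -> R) :=
  [set f | forall F : set (X -> R),
     (forall g, F g -> unit_valued g) -> Phi F `<=` F -> F f].
End Defs.

(* For <=, call f witnessed when every gap t < f x - f~(Y) is realised by a run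
   (s, z) out of x at (d_Tr (x) d_0)-distance at least t from every run out of Y.
   Functions of G are witnessed by the empty run, since their gaps are bounded
   by d_0; constant shifts do not enlarge gaps; and for O_a f one follows a
   transition x -b-> x' nearly attaining O_a f x and uses that f is witnessed at
   x' against the successors of Y reached by labels close to b, labels far from b
   being already at distance > t.  So the witnessed [0,1]-valued functions form a
   pre-fixpoint, which contains the least fixpoint.
   For >=, given a run x1 -s-> z out of X1 and eps > 0, choose g in G with
   g z = 1 that separates z from every state up to eps.  The function
   O_{s_1} ... O_{s_n} g lies in the least fixpoint, is 1 on X1, and is at most
   1 - W + eps on X2, where W is the distance from (s, z) to the runs out of X2. *)

From Pilot Require Import Defs.
From HB Require Import structures.
From mathcomp Require Import all_boot all_order all_algebra.
From mathcomp Require Import boolp classical_sets reals.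
From mathcomp Require Import lra.
Import Order.TTheory GRing.Theory Num.Theory.
Local Open Scope classical_set_scope.
Local Open Scope ring_scope.
Set Implicit Arguments. Unset Strict Implicit.

Section JoinMeet.
Variable R : realType.
Implicit Types (S : set R) (b s t : R).

Lemma bigvee_ub S s : has_ubound S -> S s -> s <= bigvee S.
Proof.
move=> ubS Ss; rewrite /bigvee.
case: (pselect (S = set0)) => /= [S0|S0]; last exact: ub_le_sup.
by move: Ss; rewrite S0.
Qed.

Lemma ge_bigvee S b : 0 <= b -> ubound S b -> bigvee S <= b.
Proof.
move=> b0 ubS; rewrite /bigvee.
by case: (pselect (S = set0)) => /= [|/eqP/set0P S0] //; exact: ge_sup.
Qed.

Lemma bigvee_gt S t : 0 <= t -> t < bigvee S -> exists2 s, S s & t < s.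
Proof.
move=> t0; rewrite /bigvee.
case: (pselect (S = set0)) => /= [S0|/eqP/set0P S0]; last exact: sup_gt.
by rewrite ltNge t0.
Qed.

Lemma bigwedge_lb S s : has_lbound S -> S s -> bigwedge S <= s.
Proof.
move=> lbS Ss; rewrite /bigwedge.
case: (pselect (S = set0)) => /= [S0|S0]; last exact: ge_inf.
by move: Ss; rewrite S0.
Qed.

Lemma le_bigwedge S b : b <= 1 -> lbound S b -> b <= bigwedge S.
Proof.
move=> b1 lbS; rewrite /bigwedge.
by case: (pselect (S = set0)) => /= [|/eqP/set0P S0] //; exact: lb_le_inf.
Qed.

Lemma bigvee01 S : S `<=` [set r | 0 <= r <= 1] -> 0 <= bigvee S <= 1.
Proof.
move=> S01; have ubS : ubound S 1 by move=> r /S01/andP[].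
rewrite ge_bigvee ?ler01 // andbT.
have [->|/set0P[s Ss]] := eqVneq S set0.
  by rewrite /bigvee; case: (pselect _) => // /(_ erefl).
have /andP[s0 _] := S01 _ Ss; apply: le_trans s0 (bigvee_ub _ Ss).
by exists 1.
Qed.

Lemma bigwedge01 S : S `<=` [set r | 0 <= r <= 1] -> 0 <= bigwedge S <= 1.
Proof.
move=> S01; have lbS : lbound S 0 by move=> r /S01/andP[].
rewrite le_bigwedge ?ler01 //=.
have [->|/set0P[s Ss]] := eqVneq S set0.
  by rewrite /bigwedge; case: (pselect _) => // /(_ erefl).
have /andP[_ s1] := S01 _ Ss; apply: le_trans (bigwedge_lb _ Ss) s1.
by exists 0.
Qed.

End JoinMeet.

Section Truncation.
Variable R : realType.
Implicit Types a b c : R.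

Lemma ominusE a b : b <= a -> ominus a b = a - b.
Proof. by move=> ba; rewrite /ominus max_r // subr_ge0. Qed.

Lemma ominus_ge0 a b : 0 <= ominus a b.
Proof. by rewrite le_max lexx. Qed.

Lemma subr_le_ominus a b : a - b <= ominus a b.
Proof. by rewrite le_max lexx orbT. Qed.

Lemma ominus_gt0 a b : 0 < ominus a b -> b < a.
Proof. by rewrite lt_max ltxx subr_gt0. Qed.

Lemma ge_ominus a b c : 0 <= c -> a - b <= c -> ominus a b <= c.
Proof. by move=> c0 abc; rewrite ge_max c0. Qed.

Lemma ominusr0 a : 0 <= a -> ominus a 0 = a.
Proof. by move=> a0; rewrite ominusE // subr0. Qed.

Lemma ominus01 a b : 0 <= a <= 1 -> 0 <= b <= 1 -> 0 <= ominus a b <= 1.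
Proof. by move=> /andP[? ?] /andP[? ?]; rewrite ominus_ge0 ge_ominus //; lra. Qed.

Lemma oplus_le1 a b : oplus a b <= 1.
Proof. by rewrite ge_min lexx orbT. Qed.

Lemma oplus_le_add a b : oplus a b <= a + b.
Proof. by rewrite ge_min lexx. Qed.

Lemma oplusE a b : oplus a b < 1 -> oplus a b = a + b.
Proof. by rewrite /oplus minEle; case: ifP => // _; rewrite ltxx. Qed.

Lemma oplus01 a b : 0 <= a <= 1 -> 0 <= b <= 1 -> 0 <= oplus a b <= 1.
Proof. by move=> /andP[? ?] /andP[? ?]; rewrite oplus_le1 le_min ler01 andbT; lra. Qed.

End Truncation.

Section Lifting.
Variables (R : realType) (X : Type).
Implicit Types (f : X -> R) (Y : set X).

Lemma lift_fun_ub f Y y : unit_valued f -> Y y -> f y <= lift_fun f Y.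
Proof.
move=> f01 Yy; apply: bigvee_ub; last by exists y.
by exists 1 => _ [z _ <-]; case/andP: (f01 z).
Qed.

Lemma ge_lift_fun f Y b : 0 <= b -> (forall y, Y y -> f y <= b) -> lift_fun f Y <= b.
Proof. by move=> b0 fb; apply: ge_bigvee => // _ [y Yy <-]; apply: fb. Qed.

Lemma lift_fun_gt f Y t : 0 <= t -> t < lift_fun f Y -> exists2 y, Y y & t < f y.
Proof. by move=> t0 /(bigvee_gt t0)[_ [y Yy <-]]; exists y. Qed.

Lemma lift_fun01 f Y : unit_valued f -> 0 <= lift_fun f Y <= 1.
Proof. by move=> f01; apply: bigvee01 => _ [y _ <-]; apply: f01. Qed.

End Lifting.

Section FixpointOperators.
Variables (R : realType) (X : Type).
Implicit Types (Phi : set (X -> R) -> set (X -> R)) (S : set (X -> R)) (f : X -> R).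

Lemma lfp_sub Phi S :
  (forall f, S f -> unit_valued f) -> Phi S `<=` S -> lfp Phi `<=` S.
Proof. by move=> S01 PhiS f; apply. Qed.

Lemma sub_lfp Phi S :
  (forall F, S `<=` Phi F) -> S `<=` lfp Phi.
Proof. by move=> SPhi f Sf F _ PhiF; apply/PhiF/SPhi. Qed.

Lemma lfp_closed Phi (op : (X -> R) -> X -> R) f :
  (forall F f, F f -> unit_valued f -> Phi F (op f)) -> lfp Phi f -> lfp Phi (op f).
Proof.
move=> PhiOp lfp_f F F01 PhiF; have Ff := lfp_f F F01 PhiF.
by apply/PhiF/PhiOp => //; apply: F01.
Qed.

Lemma cl_sh_id (F : set (X -> R)) f :
  F f -> unit_valued f -> cl_sh F f.
Proof.
move=> Ff f01; exists f, 0; split => //; first by rewrite lexx ler01.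
by left; apply: funext => x; rewrite ominusr0 //; case/andP: (f01 x).
Qed.

End FixpointOperators.

Section Hausdorff.
Variables (R : realType) (U : Type) (d : U -> U -> R).
Hypothesis d01 : forall u v, 0 <= d u v <= 1.

Lemma inf_dist01 u T : 0 <= bigwedge [set d u v | v in T] <= 1.
Proof. by apply: bigwedge01 => _ [v _ <-]; apply: d01. Qed.

Lemma hausdorff01 S T : 0 <= hausdorff d S T <= 1.
Proof. by apply: bigvee01 => _ [u _ <-]; apply: inf_dist01. Qed.

Lemma le_hausdorff S T u t : S u -> t <= 1 -> (forall v, T v -> t <= d u v) ->
  t <= hausdorff d S T.
Proof.
move=> Su t1 tT; apply: le_trans (_ : bigwedge [set d u v | v in T] <= _).
  by apply: le_bigwedge => // _ [v Tv <-]; apply: tT.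
apply: bigvee_ub; last by exists u.
by exists 1 => _ [w _ <-]; case/andP: (inf_dist01 w T).
Qed.

Lemma dprod01 (V : Type) (d' : V -> V -> R) p q :
  (forall v w, 0 <= d' v w <= 1) -> 0 <= dprod d d' p q <= 1.
Proof.
move=> d'01; have /andP[? ?] := d01 p.1 q.1; have /andP[? ?] := d'01 p.2 q.2.
by rewrite le_max ge_max; apply/andP; split; [apply/orP; left|apply/andP; split].
Qed.

End Hausdorff.

Section TransitionSystem.
Variables (R : realType) (X A : Type) (trans : X -> A -> X -> Prop) (dA : A -> A -> R).
Hypothesis dA_metric : unit_metric dA.

Local Notation path := (Defs.path trans).
Local Notation next := (next_op trans dA).

Lemma dA01 a b : 0 <= dA a b <= 1. Proof. by case: dA_metric. Qed.
Lemma dAxx a : dA a a = 0. Proof. by case: dA_metric => _ dA0 _ _; apply/dA0. Qed.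
Lemma dAC a b : dA a b = dA b a. Proof. by case: dA_metric. Qed.
Lemma dA_triangle a b c : dA a c <= dA a b + dA b c. Proof. by case: dA_metric. Qed.

Lemma dTr_rec01 s t : 0 <= dTr_rec dA s t <= 1.
Proof.
elim: s t => [|a s IH] [|b t] //=; rewrite ?lexx ?ler01 //.
have /andP[? ?] := dA01 a b; have /andP[? ?] := IH t.
by rewrite le_max ge_max; apply/andP; split; [apply/orP; left|apply/andP; split].
Qed.

Lemma dTr01 s t : 0 <= dTr dA s t <= 1.
Proof. by rewrite /dTr; case: ifP => _; rewrite ?lexx ?ler01 ?dTr_rec01. Qed.

(* This holds for lengths that differ as well, both sides being 1 then. *)
Lemma dTr_cons a s b t : dTr dA (a :: s) (b :: t) = Num.max (dA a b) (dTr dA s t).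
Proof.
rewrite /dTr /= eqSS; case: ifP => // _.
by rewrite max_r //; case/andP: (dA01 a b).
Qed.

Lemma dprod_cons (V : Type) (d : V -> V -> R) a s x b t y :
  dprod (dTr dA) d (a :: s, x) (b :: t, y) =
  Num.max (dA a b) (dprod (dTr dA) d (s, x) (t, y)).
Proof. by rewrite /dprod /= dTr_cons maxA. Qed.

Lemma next_op01 a f : unit_valued f -> unit_valued (next a f).
Proof.
move=> f01 x; apply: bigvee01 => _ [b [x' [_ ->]]].
have /andP[? ?] := f01 x'; have /andP[? ?] := dA01 b a.
by rewrite /= le_min ge_min; apply/andP; split; [apply/andP; split|apply/orP; right]; lra.
Qed.

Lemma next_op_ge a f x b x' : unit_valued f -> trans x b x' ->
  Num.min (1 - dA b a) (f x') <= next a f x.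
Proof.
move=> f01 xbx'; apply: bigvee_ub; last by exists b, x'.
by exists 1 => _ [c [y [_ ->]]]; rewrite ge_min; apply/orP; right; case/andP: (f01 y).
Qed.

Definition next_seq (s : seq A) (g : X -> R) : X -> R := foldr next g s.

Lemma next_seq01 s g : unit_valued g -> unit_valued (next_seq s g).
Proof. by move=> g01; elim: s => [|a s IH] //=; apply: next_op01. Qed.

Lemma next_seq_path x s z g : unit_valued g -> path x s z -> g z <= next_seq s g x.
Proof.
move=> g01; elim=> [//|y a y' s' z' yay' _ IH] /=.
apply: le_trans IH (le_trans _ (next_op_ge a (next_seq01 s' g01) yay')).
by rewrite dAxx subr0 le_min lexx andbT; case/andP: (next_seq01 s' g01 y').
Qed.

Lemma ge_next_seq s g y K : unit_valued g -> 0 <= K ->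
  (forall u z, path y u z -> Num.min (1 - dTr dA s u) (g z) <= K) ->
  next_seq s g y <= K.
Proof.
move=> g01 K0; elim: s y => [|a s IH] y gK /=.
  have := gK _ _ (path_nil trans y); rewrite /dTr /= subr0 ge_min => /orP[|//].
  by apply: le_trans; case/andP: (g01 y).
apply: ge_bigvee => // _ [b [y' [yby' ->]]].
rewrite ge_min; have [//|baK] := leP (1 - dA b a) K.
apply/orP; right; apply: IH => u z y'uz.
have := gK _ _ (path_cons yby' y'uz); rewrite dTr_cons (dAC a b) ge_min.
case/orP => [|gzK]; last by rewrite ge_min gzK orbT.
rewrite ge_min maxEle; case: (leP (dA b a) (dTr dA s u)) => _ hK; first by rewrite hK.
lra.
Qed.

Variable G : set (X -> R).
Hypothesis G01 : forall g, G g -> unit_valued g.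

Local Notation d0 := (alphaS G).
Local Notation D := (dprod (dTr dA) d0).
Local Notation H := (hausdorff D).
Local Notation dh := (delta_hat trans).

Lemma alphaS01 x y : 0 <= d0 x y <= 1.
Proof. by apply: bigvee01 => _ [g Gg <-]; apply: ominus01; apply: G01. Qed.

Lemma alphaS_ge g x y : G g -> ominus (g x) (g y) <= d0 x y.
Proof.
move=> Gg; apply: bigvee_ub; last by exists g.
by exists 1 => _ [h Gh <-]; case/andP: (ominus01 (G01 Gh x) (G01 Gh y)).
Qed.

Lemma D01 p q : 0 <= D p q <= 1.
Proof. by apply: (dprod01 dTr01) => v w; apply: alphaS01. Qed.

Definition path_separated (x : X) (Y : set X) (t : R) : Prop :=
  exists s z, path x s z /\
    forall y u z', Y y -> path y u z' -> t <= D (s, z) (u, z').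

Definition witnessed (f : X -> R) : Prop :=
  forall x Y t, 0 < t -> t < f x - lift_fun f Y -> path_separated x Y t.

Definition sound (f : X -> R) : Prop := unit_valued f /\ witnessed f.

Lemma witnessed_intro f :
  (forall x Y t, Y !=set0 -> 0 < t -> t < f x - lift_fun f Y -> path_separated x Y t) ->
  witnessed f.
Proof.
move=> wf x Y t; have [->|/set0P Y0] := eqVneq Y set0; last exact: wf.
by move=> _ _; exists [::], x; split=> [|y u z' []]; first exact: path_nil.
Qed.

Lemma witnessed_G g : G g -> witnessed g.
Proof.
move=> Gg; have g01 := G01 Gg.
apply: witnessed_intro => x Y t _ t0 gap.
have /andP[gY0 _] := lift_fun01 Y g01; have /andP[_ gx1] := g01 x.
exists [::], x; split=> [|y u z' + yuz']; first exact: path_nil.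
case: yuz' => [{}y Yy|{}y c y' u' {}z' _ _ _]; last first.
  by rewrite /dprod /dTr /= le_max; apply/orP; left; lra.
rewrite /dprod le_max /=; apply/orP; right.
have := alphaS_ge x y Gg; have := subr_le_ominus (g x) (g y).
have := lift_fun_ub g01 Yy; lra.
Qed.

Lemma witnessed_const1 : witnessed (@const1 R X).
Proof.
apply: witnessed_intro => x Y t [y Yy] t0.
have : 1 <= lift_fun (@const1 R X) Y.
  by apply: (lift_fun_ub _ Yy) => z; rewrite /const1 ler01 lexx.
rewrite /const1; lra.
Qed.

Lemma witnessed_gap f g :
  (forall x Y, Y !=set0 -> 0 < g x - lift_fun g Y ->
     g x - lift_fun g Y <= f x - lift_fun f Y) ->
  witnessed f -> witnessed g.
Proof.
move=> gap wf; apply: witnessed_intro => x Y t Y0 t0 gt.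
have gap_gt0 : 0 < g x - lift_fun g Y by lra.
by apply: wf => //; apply: lt_le_trans gt (gap _ _ Y0 gap_gt0).
Qed.

Lemma witnessed_ominus f c : unit_valued f -> 0 <= c <= 1 -> witnessed f ->
  witnessed (fun x => ominus (f x) c).
Proof.
move=> f01 c01; apply: witnessed_gap => x Y _ gap.
have g01 : unit_valued (fun x => ominus (f x) c) by move=> y; apply: ominus01.
have /andP[gY0 _] := lift_fun01 Y g01; have /andP[c0 _] := c01.
have gx : ominus (f x) c = f x - c by apply/ominusE/ltW/ominus_gt0; lra.
suff : lift_fun f Y <= lift_fun (fun x => ominus (f x) c) Y + c by lra.
apply: ge_lift_fun => [|y Yy]; first lra.
have := lift_fun_ub g01 Yy; have := subr_le_ominus (f y) c; lra.
Qed.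

Lemma witnessed_oplus f c : unit_valued f -> 0 <= c <= 1 -> witnessed f ->
  witnessed (fun x => oplus (f x) c).
Proof.
move=> f01 c01; apply: witnessed_gap => x Y [y0 Yy0] gap.
have g01 : unit_valued (fun x => oplus (f x) c) by move=> y; apply: oplus01.
have gx1 := oplus_le1 (f x) c; have gx := oplus_le_add (f x) c.
have gY y : Y y -> oplus (f y) c = f y + c.
  by move=> Yy; apply: oplusE; have := lift_fun_ub g01 Yy; lra.
suff : lift_fun f Y <= lift_fun (fun x => oplus (f x) c) Y - c by lra.
apply: ge_lift_fun => [|y Yy].
  by have := lift_fun_ub g01 Yy0; rewrite /= gY //; case/andP: (f01 y0); lra.
by have := lift_fun_ub g01 Yy; rewrite /= gY //; lra.
Qed.

Lemma witnessed_next a f : unit_valued f -> witnessed f -> witnessed (next a f).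
Proof.
move=> f01 wf; apply: witnessed_intro => x Y t _ t0.
have h01 := next_op01 a f01.
have /andP[L0 _] := lift_fun01 Y h01; have /andP[_ hx1] := h01 x.
set L := lift_fun (next a f) Y in L0 * => gap.
have tL0 : 0 <= t + L by lra.
have : t + L < next a f x by lra.
case/(bigvee_gt tL0) => _ [b [x' [xbx' ->]]] m_gt.
set m := Num.min _ _ in m_gt.
have [m_dA m_f] : m <= 1 - dA b a /\ m <= f x' by split; rewrite ge_min lexx ?orbT.
(* Runs out of Y whose first label is close to b are handled by [wf] at x'. *)
pose Y' := [set y' | exists y c, [/\ Y y, trans y c y' & dA b c < m - L]].
have fY' : lift_fun f Y' <= L.
  apply: ge_lift_fun => // y' [y [c [Yy ycy' bc]]].
  have := le_trans (next_op_ge a f01 ycy') (lift_fun_ub h01 Yy); rewrite -/L ge_min.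
  have := dA_triangle c b a; rewrite (dAC c b).
  by move=> tri /orP[|//]; lra.
have /(wf x' Y' t t0)[s [z [x'sz far]]] : t < f x' - lift_fun f Y' by lra.
exists (b :: s), z; split=> [|y u z' + yuz']; first exact: path_cons xbx' x'sz.
case: yuz' => [{}y _|{}y c y' u' {}z' ycy' y'u'z' Yy].
  by rewrite /dprod /dTr /= le_max; apply/orP; left; lra.
rewrite dprod_cons le_max; have [bc|bc] := ltP (dA b c) (m - L).
  by apply/orP; right; apply: far y'u'z'; exists y, c.
by apply/orP; left; lra.
Qed.

Lemma sound_G : G `<=` sound.
Proof. by move=> g Gg; split; [apply: G01 | apply: witnessed_G]. Qed.

Lemma sound_next a f : sound f -> sound (next a f).
Proof. by case=> f01 wf; split; [apply: next_op01 | apply: witnessed_next]. Qed.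

Lemma sound_cl_sh : cl_sh sound `<=` sound.
Proof.
move=> _ [f [c [[f01 wf] c01 [->|->]]]]; split.
- by move=> x; apply: ominus01.
- exact: witnessed_ominus.
- by move=> x; apply: oplus01.
- exact: witnessed_oplus.
Qed.

Lemma sound_const1 : sound (@const1 R X).
Proof. by split; [move=> x; rewrite /const1 lexx ler01 | apply: witnessed_const1]. Qed.

Lemma loT_sound : loT trans dA sound `<=` sound.
Proof.
move=> _ [[a [f [/sound_cl_sh sf ->]]]|->]; [exact: sound_next | exact: sound_const1].
Qed.

Lemma lo'_sound : lo' trans dA sound `<=` sound.
Proof. by move=> _ [[a [f [sf ->]]]|->]; [exact: sound_next | exact: sound_const1]. Qed.

Lemma ominus_lift_le_hausdorff f X1 X2 : sound f ->
  ominus (lift_fun f X1) (lift_fun f X2) <= H (dh X1) (dh X2).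
Proof.
move=> [f01 wf]; have /andP[H0 H1] := hausdorff01 D01 (dh X1) (dh X2).
have /andP[fX1_0 fX1_1] := lift_fun01 X1 f01; have /andP[fX2_0 fX2_1] := lift_fun01 X2 f01.
apply: ge_ominus => //; rewrite leNgt; apply/negP => gap.
pose t := (H (dh X1) (dh X2) + (lift_fun f X1 - lift_fun f X2)) / 2.
have tX2_0 : 0 <= t + lift_fun f X2 by rewrite /t; lra.
have [|x X1x fx] := lift_fun_gt tX2_0 (_ : _ < lift_fun f X1); first by rewrite /t; lra.
have /(wf x X2 t)[|s [z [xsz far]]] : t < f x - lift_fun f X2 by lra.
  by rewrite /t; lra.
suff : t <= H (dh X1) (dh X2) by rewrite /t; lra.
apply: (le_hausdorff D01 (u := (s, z))); [by exists x | rewrite /t; lra |].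
by move=> [u z'] [y X2y /= yuz']; apply: far X2y yuz'.
Qed.

Lemma alphaT_le_hausdorff M X1 X2 : M `<=` sound ->
  alphaT M X1 X2 <= H (dh X1) (dh X2).
Proof.
move=> Msound; apply: ge_bigvee => [|_ [f Mf <-]].
  by case/andP: (hausdorff01 D01 (dh X1) (dh X2)).
exact/ominus_lift_le_hausdorff/Msound.
Qed.

Hypothesis G_separating : forall (eps : R) (x : X), 0 < eps ->
  exists g, [/\ G g, g x = 1 & forall x', ominus (g x) (g x') >= d0 x x' - eps].

Lemma hausdorff_le_alphaT M X1 X2 :
  (forall f, M f -> unit_valued f) -> G `<=` M -> (forall a f, M f -> M (next a f)) ->
  H (dh X1) (dh X2) <= alphaT M X1 X2.
Proof.
move=> M01 GM nextM.
have gaps01 : [set ominus (lift_fun f X1) (lift_fun f X2) | f in M] `<=`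
    [set r | 0 <= r <= 1].
  by move=> _ [f Mf <-]; apply: ominus01; apply: lift_fun01; apply: M01.
have /andP[alphaT0 _] := bigvee01 gaps01.
apply: ge_bigvee => // _ [[s z] [x1 X1x1 /= x1sz] <-].
apply/ler_addgt0Pr => e e0.
have [g [Gg gz1 g_sep]] := G_separating z e0; have g01 := G01 Gg.
have /andP[W0 W1] := inf_dist01 D01 (s, z) (dh X2).
set W := bigwedge _ in W0 W1 *.
pose f := next_seq s g.
have Mf : M f by rewrite /f; elim: (s) => [|a s' IH] /=; [apply: GM | apply: nextM].
have fX1 : 1 <= lift_fun f X1.
  rewrite -gz1; apply: le_trans (next_seq_path g01 x1sz) _.
  exact: lift_fun_ub (next_seq01 s g01) X1x1.
have fX2 : lift_fun f X2 <= 1 - W + e.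
  apply: ge_lift_fun => [|y X2y]; first lra.
  apply: ge_next_seq => // [|u z' yuz']; first lra.
  have : W <= D (s, z) (u, z').
    apply: bigwedge_lb; last by exists (u, z') => //; exists y.
    by exists 0 => _ [q _ <-]; case/andP: (D01 (s, z) q).
  have : g z' <= 1 - d0 z z' + e.
    by have := g_sep z'; rewrite gz1 ominusE; [lra | case/andP: (g01 z')].
  rewrite ge_min /dprod le_max /= => gz' /orP[Wp|Wq]; apply/orP; [left|right]; lra.
have : ominus (lift_fun f X1) (lift_fun f X2) <= alphaT M X1 X2.
  by apply: bigvee_ub; [exists 1 => r /gaps01/andP[] | exists f].
have := subr_le_ominus (lift_fun f X1) (lift_fun f X2); lra.
Qed.

Lemma alphaT_lfp (Phi : set (X -> R) -> set (X -> R)) X1 X2 :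
  (forall F, G `<=` Phi F) ->
  (forall F a f, F f -> unit_valued f -> Phi F (next a f)) ->
  Phi sound `<=` sound ->
  alphaT (lfp Phi) X1 X2 = H (dh X1) (dh X2).
Proof.
move=> GPhi nextPhi Phi_sound.
have lfp_sound : lfp Phi `<=` sound by apply: lfp_sub => // f [].
apply/le_anti/andP; split; first exact: alphaT_le_hausdorff.
apply: hausdorff_le_alphaT => [f /lfp_sound[] // | | a f]; first exact: sub_lfp.
by apply: lfp_closed => F g Fg g01; apply: nextPhi.
Qed.

End TransitionSystem.

Theorem mainTheorem4 (R : realType) (X A : Type)
  (trans : X -> A -> X -> Prop) (dA : A -> A -> R)
  (G : set (X -> R)) :
  unit_metric dA ->
  (forall g, G g -> unit_valued g) ->
  (forall (eps : R) (x : X), 0 < eps ->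
     exists g, [/\ G g, g x = 1 &
       forall x', ominus (g x) (g x') >= alphaS G x x' - eps]) ->
  (forall X1 X2 : set X,
     alphaT (lfp (fun F => loT trans dA F `|` G)) X1 X2 =
     hausdorff (dprod (dTr dA) (alphaS G))
       (delta_hat trans X1) (delta_hat trans X2)) /\
  (forall X1 X2 : set X,
     alphaT (lfp (fun F => lo' trans dA F `|` G)) X1 X2 =
     hausdorff (dprod (dTr dA) (alphaS G))
       (delta_hat trans X1) (delta_hat trans X2)).
Proof.
move=> dA_metric G01 G_sep; split=> X1 X2;
  apply: (alphaT_lfp dA_metric G01 G_sep) => [F|F a f Ff f01|f].
- exact: subsetUr.
- by left; left; exists a, f; split => //; apply: cl_sh_id.
- by case=> [/(loT_sound dA_metric)|/(sound_G trans dA G01)].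
- exact: subsetUr.
- by left; left; exists a, f.
- by case=> [/(lo'_sound dA_metric)|/(sound_G trans dA G01)].
Qed.
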